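(* If $\mu>-3$ and $|\nu|<\mu+3$, then the function $x\mapsto x\tilde{t}_{\mu,\nu}'(x)/\tilde{t}_{\mu,\nu}(x)$ is strictly increasing on $(0,\infty)$.
   Context: For real $\mu,\nu$ the (normalized) modified Lommel function of the first kind is $$\tilde{t}_{\mu,\nu}(x)=\sum_{k=0}^\infty\frac{(\frac{1}{2}x)^{\mu+2k+1}}{\Gamma\big(k+\frac{\mu-\nu+3}{2}\big)\Gamma\big(k+\frac{\mu+\nu+3}{2}\big)},\quad x>0.$$ *)

From Stdlib Require Import Reals.
From Coquelicot Require Import Coquelicot.
Open Scope R_scope.

(* Euler's Gamma function, Gamma(s) = int_0^oo t^(s-1) e^(-t) dt, for s > 0
   (only ever applied to positive arguments below). *)
Definition Gamma (s : R) : R :=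
  RInt_gen (fun t => Rpower t (s - 1) * exp (- t)) (at_right 0) (Rbar_locally p_infty).

Definition lommel_t (mu nu : R) (x : R) : R :=
  Series (fun k : nat =>
    Rpower (x / 2) (mu + 2 * INR k + 1) /
    (Gamma (INR k + (mu - nu + 3) / 2) * Gamma (INR k + (mu + nu + 3) / 2))).

(* For x > 0, t(x) = (x/2)^(mu+1) F((x/2)^2) with F(z) = sum_k c_k z^k and
   c_k = 1 / (Gamma(k + a) Gamma(k + b)), where a, b = (mu -+ nu + 3)/2 > 0.
   Elasticities add under products and multiply under composition, so
   x t'(x)/t(x) = mu + 1 + 2 e((x/2)^2) with e(z) = z F'(z)/F(z).
   For any power series F with positive coefficients e is strictly increasing:
   if m = e(z1) and r = z2/z1 > 1, then z2 F'(z2) - m F(z2) is the sum of the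
   terms (k - m) c_k z1^k (r^k - r^m), which are nonnegative, the one for k = 0
   being positive.  That F is entire follows from Gamma(n+1+a) >= T^n e^(-T-1)
   for every T >= 1, obtained (like Gamma > 0) by comparing the improper
   integral defining Gamma with its integrals over compact intervals. *)

From Stdlib Require Import Reals Lra Lia Classical.
From Coquelicot Require Import Coquelicot.
Open Scope R_scope.

Lemma is_derive_Rpower (p x : R) : 0 < x ->
  is_derive (fun t => Rpower t p) x (p * Rpower x (p - 1)).
Proof. intros Hx; apply is_derive_Reals, derivable_pt_lim_power, Hx. Qed.

Lemma ex_derive_Rpower (p x : R) : 0 < x -> ex_derive (fun t => Rpower t p) x.
Proof. intros Hx; eexists; apply is_derive_Rpower, Hx. Qed.

(* [Rpower x p] is [exp (p * ln x)], hence positive even for [x <= 0]. *)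
Lemma Rpower_pos (x p : R) : 0 < Rpower x p.
Proof. apply exp_pos. Qed.

Lemma exp_le_exp (x y : R) : x <= y -> exp x <= exp y.
Proof. intros [Hlt | ->]; [left; apply exp_increasing, Hlt | right; reflexivity]. Qed.

Lemma Rpower_le_exp_half (p : R) :
  exists K, 0 < K /\ forall t, 1 <= t -> Rpower t p <= K * exp (t / 2).
Proof.
  set (q := Rmax p 1).
  assert (Hq1 : 1 <= q) by apply Rmax_r.
  assert (Hpq : p <= q) by apply Rmax_l.
  (* from ln u <= u - 1 at u = t / (2 q) *)
  exists (exp (q * (ln (2 * q) - 1))); split; [apply exp_pos |].
  intros t Ht.
  apply Rle_trans with (Rpower t q); [apply Rle_Rpower; assumption |].
  assert (Hln : 1 + ln (t / (2 * q)) <= t / (2 * q)).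
  { rewrite <- (exp_ln (t / (2 * q))) at 2 by (apply Rdiv_lt_0_compat; lra).
    apply exp_ineq1_le. }
  assert (Hsplit : ln t = ln (t / (2 * q)) + ln (2 * q)).
  { rewrite <- ln_mult by (try apply Rdiv_lt_0_compat; lra).
    f_equal; field; lra. }
  assert (Hhalf : q * (t / (2 * q)) = t / 2) by (field; lra).
  unfold Rpower; rewrite Rmult_comm, <- exp_plus.
  apply exp_le_exp; rewrite Hsplit; nra.
Qed.

Section NonnegIntegrand.

Variable f : R -> R.
Hypothesis f_cont : forall x, 0 < x -> continuous f x.
Hypothesis f_nonneg : forall x, 0 < x -> 0 <= f x.

Lemma ex_RInt_pos (a b : R) : 0 < a -> a <= b -> ex_RInt f a b.
Proof.
  intros Ha Hab; apply (@ex_RInt_continuous R_CompleteNormedModule).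
  intros z Hz; apply f_cont; rewrite Rmin_left in Hz; lra.
Qed.

Lemma RInt_le_wider (a b a' b' : R) :
  0 < a' -> a' <= a -> a <= b -> b <= b' -> RInt f a b <= RInt f a' b'.
Proof.
  intros Ha' Ha'a Hab Hbb'.
  assert (Hleft := RInt_Chasles f a' a b' (ex_RInt_pos a' a Ha' Ha'a)
                     (ex_RInt_pos a b' ltac:(lra) ltac:(lra))).
  assert (Hright := RInt_Chasles f a b b' (ex_RInt_pos a b ltac:(lra) Hab)
                      (ex_RInt_pos b b' ltac:(lra) Hbb')).
  assert (0 <= RInt f a' a).
  { apply RInt_ge_0; [lra | apply ex_RInt_pos; lra | intros; apply f_nonneg; lra]. }
  assert (0 <= RInt f b b').
  { apply RInt_ge_0; [lra | apply ex_RInt_pos; lra | intros; apply f_nonneg; lra]. }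
  change plus with Rplus in Hleft, Hright; simpl in Hleft, Hright; lra.
Qed.

(* The improper integral is the supremum of the integrals over [a, b]. *)
Lemma is_RInt_gen_of_bounded (B : R) :
  (forall a b, 0 < a -> a <= b -> RInt f a b <= B) ->
  exists L, is_RInt_gen f (at_right 0) (Rbar_locally p_infty) L /\
    forall a b, 0 < a -> a <= b -> RInt f a b <= L.
Proof.
  intros HB.
  set (E := fun v => exists a b, 0 < a /\ a <= b /\ v = RInt f a b).
  assert (E_bound : bound E) by (exists B; intros v (a & b & Ha & Hab & ->); auto).
  assert (E_inhabited : exists v, E v) by (exists (RInt f 1 1), 1, 1; repeat split; lra).
  destruct (completeness E E_bound E_inhabited) as [L [L_ub L_least]].
  assert (L_ge : forall a b, 0 < a -> a <= b -> RInt f a b <= L)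
    by (intros a b Ha Hab; apply L_ub; exists a, b; auto).
  exists L; split; [| exact L_ge].
  intros P [eps HP].
  assert (approx : exists a0 b0, 0 < a0 /\ a0 <= b0 /\ L - eps < RInt f a0 b0).
  { apply NNPP; intros Hnot.
    enough (L <= L - eps) by (destruct eps; simpl in *; lra).
    apply L_least; intros v (a & b & Ha & Hab & ->).
    apply Rnot_lt_le; intros Hlt; apply Hnot; exists a, b; auto. }
  destruct approx as (a0 & b0 & Ha0 & Hab0 & Happrox).
  apply (Filter_prod _ _ _ (fun a => 0 < a < a0) (fun b => b0 < b)).
  - unfold at_right, within; apply (filter_imp (fun a => a < a0));
      [intros a Haa0 Hpos; split; assumption |].
    exact (open_lt a0 0 Ha0).
  - exists b0; auto.
  - intros a b [Ha Haa0] Hbb0; exists (RInt f a b); split.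
    + apply (@RInt_correct R_CompleteNormedModule), ex_RInt_pos; lra.
    + apply HP; change (Rabs (RInt f a b - L) < eps).
      assert (RInt f a0 b0 <= RInt f a b) by (apply RInt_le_wider; lra).
      assert (RInt f a b <= L) by (apply L_ge; lra).
      rewrite Rabs_left1 by lra; destruct eps; simpl in *; lra.
Qed.

End NonnegIntegrand.

Definition Gamma_integrand (s t : R) : R := Rpower t (s - 1) * exp (- t).

Lemma Gamma_integrand_pos (s t : R) : 0 < Gamma_integrand s t.
Proof. apply Rmult_lt_0_compat; apply exp_pos. Qed.

Lemma Gamma_integrand_continuous (s t : R) : 0 < t -> continuous (Gamma_integrand s) t.
Proof.
  intros Ht; apply (@ex_derive_continuous R_AbsRing R_NormedModule).
  unfold Gamma_integrand; auto_derive; apply ex_derive_Rpower, Ht.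
Qed.

Lemma RInt_Gamma_integrand_head (s a : R) : 0 < s -> 0 < a <= 1 ->
  RInt (Gamma_integrand s) a 1 <= / s.
Proof.
  intros Hs Ha.
  assert (Hprim : is_RInt (fun t => Rpower t (s - 1)) a 1
                    (minus (/ s * Rpower 1 s) (/ s * Rpower a s))).
  { apply (@is_RInt_derive R_CompleteNormedModule (fun t => / s * Rpower t s)).
    - intros t Ht; rewrite Rmin_left in Ht by lra.
      replace (Rpower t (s - 1)) with (/ s * (s * Rpower t (s - 1))) by (field; lra).
      apply (is_derive_scal (fun u => Rpower u s)), is_derive_Rpower; lra.
    - intros t Ht; rewrite Rmin_left in Ht by lra.
      apply (@ex_derive_continuous R_AbsRing R_NormedModule), ex_derive_Rpower; lra. }
  apply Rle_trans with (RInt (fun t => Rpower t (s - 1)) a 1).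
  - apply RInt_le; [lra | | eexists; exact Hprim |].
    + apply ex_RInt_pos; [apply Gamma_integrand_continuous | lra | lra].
    + intros t Ht; unfold Gamma_integrand.
      rewrite <- (Rmult_1_r (Rpower t (s - 1))) at 2.
      apply Rmult_le_compat_l; [left; apply Rpower_pos |].
      rewrite <- exp_0; apply exp_le_exp; lra.
  - rewrite (is_RInt_unique _ _ _ _ Hprim); simpl; unfold minus, plus, opp; simpl.
    replace (Rpower 1 s) with 1 by (unfold Rpower; rewrite ln_1, Rmult_0_r, exp_0; reflexivity).
    assert (0 < Rpower a s) by apply Rpower_pos.
    assert (0 < / s) by (apply Rinv_0_lt_compat, Hs).
    nra.
Qed.

Lemma RInt_Gamma_integrand_tail (s : R) :
  exists C, forall b, 1 <= b -> RInt (Gamma_integrand s) 1 b <= C.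
Proof.
  destruct (Rpower_le_exp_half (s - 1)) as [K [HK HKbound]].
  exists (2 * K); intros b Hb.
  assert (Hprim : is_RInt (fun t => K * exp (- t / 2)) 1 b
                    (minus (-2 * K * exp (- b / 2)) (-2 * K * exp (- 1 / 2)))).
  { apply (@is_RInt_derive R_CompleteNormedModule (fun t => -2 * K * exp (- t / 2))).
    - intros t _; auto_derive; [exact I | unfold Rdiv; field].
    - intros t _; apply (@ex_derive_continuous R_AbsRing R_NormedModule).
      auto_derive; exact I. }
  apply Rle_trans with (RInt (fun t => K * exp (- t / 2)) 1 b).
  - apply RInt_le; [lra | | eexists; exact Hprim |].
    + apply ex_RInt_pos; [apply Gamma_integrand_continuous | lra | lra].
    + intros t Ht; unfold Gamma_integrand.
      apply Rle_trans with (K * exp (t / 2) * exp (- t)).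
      * apply Rmult_le_compat_r; [left; apply exp_pos | apply HKbound; lra].
      * rewrite Rmult_assoc, <- exp_plus; right; f_equal; f_equal; field.
  - rewrite (is_RInt_unique _ _ _ _ Hprim); simpl; unfold minus, plus, opp; simpl.
    assert (0 < exp (- b / 2)) by apply exp_pos.
    assert (exp (- 1 / 2) <= 1) by (rewrite <- exp_0; apply exp_le_exp; lra).
    nra.
Qed.

Lemma RInt_Gamma_integrand_bounded (s : R) : 0 < s ->
  exists B, forall a b, 0 < a -> a <= b -> RInt (Gamma_integrand s) a b <= B.
Proof.
  intros Hs; destruct (RInt_Gamma_integrand_tail s) as [C HC].
  exists (/ s + C); intros a b Ha Hab.
  set (a' := Rmin a 1); set (b' := Rmax b 1).
  assert (a' <= 1) by apply Rmin_r; assert (a' <= a) by apply Rmin_l.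
  assert (0 < a') by (unfold a', Rmin; destruct Rle_dec; lra).
  assert (1 <= b') by apply Rmax_r; assert (b <= b') by apply Rmax_l.
  assert (Hcont := Gamma_integrand_continuous s).
  assert (Hnonneg : forall t, 0 < t -> 0 <= Gamma_integrand s t)
    by (intros; left; apply Gamma_integrand_pos).
  apply Rle_trans with (RInt (Gamma_integrand s) a' b');
    [apply RInt_le_wider; auto |].
  rewrite <- (RInt_Chasles _ a' 1 b') by (apply ex_RInt_pos; auto; lra).
  apply Rplus_le_compat; [apply RInt_Gamma_integrand_head | apply HC]; lra.
Qed.

Lemma RInt_Gamma_integrand_le_Gamma (s a b : R) : 0 < s -> 0 < a -> a <= b ->
  RInt (Gamma_integrand s) a b <= Gamma s.
Proof.
  intros Hs; destruct (RInt_Gamma_integrand_bounded s Hs) as [B HB].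
  destruct (is_RInt_gen_of_bounded (Gamma_integrand s) (Gamma_integrand_continuous s)
              (fun t _ => Rlt_le _ _ (Gamma_integrand_pos s t)) B HB) as [L [HL HLge]].
  unfold Gamma; change (fun t => Rpower t (s - 1) * exp (- t)) with (Gamma_integrand s).
  rewrite (is_RInt_gen_unique _ _ HL); exact (HLge a b).
Qed.

Lemma Gamma_pos (s : R) : 0 < s -> 0 < Gamma s.
Proof.
  intros Hs; apply Rlt_le_trans with (RInt (Gamma_integrand s) 1 2);
    [| apply RInt_Gamma_integrand_le_Gamma; lra].
  apply RInt_gt_0; [lra | intros; apply Gamma_integrand_pos |].
  intros; apply Gamma_integrand_continuous; lra.
Qed.

(* On [T, T + 1] the integrand is at least T^n e^(-(T+1)). *)
Lemma Gamma_ge_pow_exp (n : nat) (a T : R) : 0 < a -> 1 <= T ->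
  T ^ n * exp (- (T + 1)) <= Gamma (INR (S n) + a).
Proof.
  intros Ha HT; rewrite S_INR.
  assert (0 <= INR n) by apply pos_INR.
  apply Rle_trans with (RInt (Gamma_integrand (INR n + 1 + a)) T (T + 1));
    [| apply RInt_Gamma_integrand_le_Gamma; lra].
  apply Rle_trans with (RInt (fun _ => T ^ n * exp (- (T + 1))) T (T + 1)).
  { rewrite RInt_const; change scal with Rmult; simpl; right; ring. }
  apply RInt_le; [lra | apply ex_RInt_const | |].
  { apply ex_RInt_pos; [apply Gamma_integrand_continuous | lra | lra]. }
  intros t Ht; unfold Gamma_integrand.
  replace (INR n + 1 + a - 1) with (INR n + a) by ring.
  rewrite Rpower_plus, Rpower_pow by lra.
  apply Rmult_le_compat; [apply pow_le; lra | left; apply exp_pos | | apply exp_le_exp; lra].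
  rewrite <- Rmult_1_r at 1.
  apply Rmult_le_compat; [apply pow_le; lra | lra | apply pow_incr; lra |].
  unfold Rpower; rewrite <- exp_0; apply exp_le_exp.
  assert (0 <= ln t) by (rewrite <- ln_1; apply ln_le; lra).
  nra.
Qed.

Lemma CV_radius_infinite_of_bounded (c : nat -> R) :
  (forall r, exists M, forall n, Rabs (c n * r ^ n) <= M) -> CV_radius c = p_infty.
Proof.
  intros Hbounded; destruct (CV_radius_bounded c) as [Hub _].
  destruct (CV_radius c) as [x | |] eqn:Hx; [exfalso | reflexivity | exfalso].
  - assert (H := Hub (x + 1) (Hbounded (x + 1))); simpl in H; lra.
  - exact (Hub 0 (Hbounded 0)).
Qed.

Definition lommel_coef (a b : R) (k : nat) : R :=
  / (Gamma (INR k + a) * Gamma (INR k + b)).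

Lemma lommel_coef_pos (a b : R) (k : nat) : 0 < a -> 0 < b -> 0 < lommel_coef a b k.
Proof.
  intros Ha Hb; assert (0 <= INR k) by apply pos_INR.
  apply Rinv_0_lt_compat, Rmult_lt_0_compat; apply Gamma_pos; lra.
Qed.

Lemma lommel_coef_bounded (a b r : R) : 0 < a -> 0 < b ->
  exists M, forall n, Rabs (lommel_coef a b n * r ^ n) <= M.
Proof.
  intros Ha Hb.
  set (T := Rabs r + 1); assert (HT : 1 <= T) by (unfold T; pose proof (Rabs_pos r); lra).
  set (E := exp (- (T + 1))); assert (HE : 0 < E) by apply exp_pos.
  exists (Rabs (lommel_coef a b 0) + T / (E * E)).
  assert (0 <= T / (E * E)) by (apply Rmult_le_pos; [lra | left; apply Rinv_0_lt_compat; nra]).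
  intros [| m]; [simpl; rewrite Rmult_1_r; lra |].
  apply Rle_trans with (T / (E * E)); [| pose proof (Rabs_pos (lommel_coef a b 0)); lra].
  (* both Gamma factors are at least T^m E, while |r|^(m+1) <= T^(m+1) *)
  set (P := T ^ m); assert (HP : 1 <= P) by (apply pow_R1_Rle; lra).
  assert (Hcoef : lommel_coef a b (S m) <= / (P * E * (P * E))).
  { apply Rinv_le_contravar; [apply Rmult_lt_0_compat; nra |].
    apply Rmult_le_compat; try apply Gamma_ge_pow_exp; nra. }
  assert (Hpow : Rabs r ^ S m <= T * P).
  { simpl; apply Rmult_le_compat;
      [apply Rabs_pos | apply pow_le, Rabs_pos | unfold T; lra | apply pow_incr].
    split; [apply Rabs_pos | unfold T; lra]. }
  rewrite Rabs_mult, <- RPow_abs, Rabs_right by (left; apply lommel_coef_pos; auto).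
  apply Rle_trans with (/ (P * E * (P * E)) * (T * P)).
  { apply Rmult_le_compat; auto; [left; apply lommel_coef_pos; auto | apply pow_le, Rabs_pos]. }
  replace (/ (P * E * (P * E)) * (T * P)) with (T / (E * E) * / P) by (field; nra).
  rewrite <- Rmult_1_r; apply Rmult_le_compat_l; auto.
  rewrite <- Rinv_1; apply Rinv_le_contravar; lra.
Qed.

Lemma CV_radius_lommel_coef (a b : R) : 0 < a -> 0 < b ->
  CV_radius (lommel_coef a b) = p_infty.
Proof.
  intros Ha Hb; apply CV_radius_infinite_of_bounded.
  intros r; apply lommel_coef_bounded; assumption.
Qed.

Lemma lommel_t_PSeries (mu nu x : R) : 0 < x ->
  lommel_t mu nu x =
  Rpower (x / 2) (mu + 1) *
  PSeries (lommel_coef ((mu - nu + 3) / 2) ((mu + nu + 3) / 2)) ((x / 2) ^ 2).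
Proof.
  intros Hx; unfold lommel_t, PSeries; rewrite <- Series_scal_l.
  apply Series_ext; intros k; unfold lommel_coef, scal; simpl; unfold mult; simpl.
  replace (x / 2 * (x / 2 * 1)) with ((x / 2) ^ 2) by ring.
  replace (mu + 2 * INR k + 1) with (mu + 1 + INR (2 * k)) by (rewrite mult_INR; simpl; ring).
  rewrite Rpower_plus, Rpower_pow, pow_mult by lra.
  unfold Rdiv; ring.
Qed.

Definition elasticity (f : R -> R) (x : R) : R := x * Derive f x / f x.

Lemma elasticity_ext_loc (f g : R -> R) (x : R) :
  locally x (fun t => f t = g t) -> elasticity f x = elasticity g x.
Proof.
  intros Hfg; unfold elasticity.
  rewrite (Derive_ext_loc f g x Hfg), (locally_singleton _ _ Hfg); reflexivity.
Qed.

Lemma elasticity_mult (f g : R -> R) (x : R) :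
  ex_derive f x -> ex_derive g x -> f x <> 0 -> g x <> 0 ->
  elasticity (fun t => f t * g t) x = elasticity f x + elasticity g x.
Proof. intros; unfold elasticity; rewrite Derive_mult by assumption; field; auto. Qed.

Lemma elasticity_comp (f g : R -> R) (x : R) :
  ex_derive f (g x) -> ex_derive g x -> g x <> 0 -> f (g x) <> 0 ->
  elasticity (fun t => f (g t)) x = elasticity f (g x) * elasticity g x.
Proof. intros; unfold elasticity; rewrite Derive_comp by assumption; field; auto. Qed.

Lemma elasticity_scale (f : R -> R) (k x : R) :
  ex_derive f (x * k) -> k <> 0 -> x <> 0 -> f (x * k) <> 0 ->
  elasticity (fun t => f (t * k)) x = elasticity f (x * k).
Proof.
  intros Hf Hk Hx Hfx.
  assert (Hlinear : elasticity (fun t => t * k) x = 1).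
  { unfold elasticity; rewrite (Derive_scal_l id), Derive_id; unfold id; field; auto. }
  rewrite (elasticity_comp f (fun t => t * k)), Hlinear; [ring | exact Hf | | | exact Hfx].
  - auto_derive; exact I.
  - apply Rmult_integral_contrapositive_currified; assumption.
Qed.

Lemma elasticity_Rpower (p x : R) : 0 < x -> elasticity (fun t => Rpower t p) x = p.
Proof.
  intros Hx; unfold elasticity.
  replace (Derive (fun t => Rpower t p) x) with (p * Rpower x (p - 1))
    by (symmetry; apply is_derive_unique, is_derive_Rpower, Hx).
  assert (Hsplit : Rpower x p = Rpower x (p - 1) * x).
  { rewrite <- (Rpower_1 x Hx) at 3; rewrite <- Rpower_plus; f_equal; ring. }
  rewrite Hsplit; field; split; [lra | apply Rgt_not_eq, Rpower_pos].
Qed.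

Lemma elasticity_pow (n : nat) (x : R) : x <> 0 -> elasticity (fun t => t ^ n) x = INR n.
Proof.
  intros Hx; unfold elasticity.
  rewrite (Derive_pow (fun t => t)) by (auto_derive; exact I).
  change (Derive (fun t => t) x) with (Derive id x); rewrite Derive_id.
  destruct n as [| n]; [simpl; field |].
  assert (x ^ n <> 0) by (apply pow_nonzero, Hx).
  simpl pred; simpl pow; field; auto.
Qed.

Lemma is_series_PSeries (c : nat -> R) (z : R) : Rbar_lt (Rabs z) (CV_radius c) ->
  is_series (fun k => c k * z ^ k) (PSeries c z).
Proof. intros Hz; apply is_pseries_R, PSeries_correct, CV_radius_inside, Hz. Qed.

Lemma is_series_z_Derive_PSeries (c : nat -> R) (z : R) :
  Rbar_lt (Rabs z) (CV_radius c) ->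
  is_series (fun k => INR k * c k * z ^ k) (z * Derive (PSeries c) z).
Proof.
  intros Hz; apply is_pseries_R.
  eapply is_series_ext; [| exact (is_pseries_incr_1 _ _ _ (is_pseries_derive c z Hz))].
  intros [| k]; [change (1 * 0 = 1 * (0 * c 0%nat)); ring | reflexivity].
Qed.

Lemma is_series_pos (u : nat -> R) (l : R) (n : nat) :
  (forall k, 0 <= u k) -> 0 < u n -> is_series u l -> 0 < l.
Proof.
  intros Hu Hn Hl; rewrite <- (is_series_unique _ _ Hl).
  rewrite (Series_incr_n u (S n)) by (lia || (eexists; exact Hl)).
  assert (0 <= Series (fun k => u (S n + k)%nat)).
  { apply Rle_trans with (Series (fun k => 0 * u (S n + k)%nat));
      [rewrite Series_scal_l, Rmult_0_l; lra |].
    apply Series_le; [intros k; rewrite Rmult_0_l; split; [lra | apply Hu] |].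
    apply (ex_series_incr_n u (S n)); eexists; exact Hl. }
  assert (u n <= sum_f_R0 u n).
  { destruct n as [| n]; simpl; [lra |].
    assert (0 <= sum_f_R0 u n) by (apply cond_pos_sum, Hu); lra. }
  simpl pred; lra.
Qed.

Lemma is_series_elasticity_gap (c : nat -> R) (m z : R) :
  Rbar_lt (Rabs z) (CV_radius c) ->
  is_series (fun k => (INR k - m) * c k * z ^ k) (z * Derive (PSeries c) z - m * PSeries c z).
Proof.
  intros Hz.
  eapply is_series_ext;
    [| exact (is_series_minus _ _ _ _ (is_series_z_Derive_PSeries c z Hz)
                (is_series_scal_l m _ _ (is_series_PSeries c z Hz)))].
  intros k; change (INR k * c k * z ^ k - m * (c k * z ^ k) = (INR k - m) * c k * z ^ k); ring.
Qed.

Lemma Rpower_sub_mul_sub_nonneg (r x y : R) : 1 < r ->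
  0 <= (x - y) * (Rpower r x - Rpower r y).
Proof.
  intros Hr; destruct (Rle_or_lt y x) as [Hyx | Hxy].
  - apply Rmult_le_pos; [lra |]; apply Rge_le, Rge_minus, Rle_ge, Rle_Rpower; lra.
  - assert (Rpower r x < Rpower r y) by (apply Rpower_lt; assumption); nra.
Qed.

Section PositiveCoefficients.

Variable c : nat -> R.
Hypothesis c_pos : forall k, 0 < c k.

Lemma PSeries_term_nonneg (z : R) (k : nat) : 0 <= z -> 0 <= c k * z ^ k.
Proof. intros Hz; apply Rmult_le_pos; [left; apply c_pos | apply pow_le, Hz]. Qed.

Lemma PSeries_pos (z : R) : 0 < z -> Rbar_lt z (CV_radius c) -> 0 < PSeries c z.
Proof.
  intros Hz Hrad; apply (is_series_pos (fun k => c k * z ^ k) _ 0).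
  - intros k; apply PSeries_term_nonneg; lra.
  - simpl; rewrite Rmult_1_r; apply c_pos.
  - apply is_series_PSeries; rewrite Rabs_pos_eq by lra; exact Hrad.
Qed.

Lemma z_Derive_PSeries_pos (z : R) : 0 < z -> Rbar_lt z (CV_radius c) ->
  0 < z * Derive (PSeries c) z.
Proof.
  intros Hz Hrad; apply (is_series_pos (fun k => INR k * c k * z ^ k) _ 1).
  - intros k; rewrite Rmult_assoc.
    apply Rmult_le_pos; [apply pos_INR | apply PSeries_term_nonneg; lra].
  - simpl; rewrite Rmult_1_r, Rmult_1_l; apply Rmult_lt_0_compat; [apply c_pos | exact Hz].
  - apply is_series_z_Derive_PSeries; rewrite Rabs_pos_eq by lra; exact Hrad.
Qed.

Lemma elasticity_PSeries_lt (z1 z2 : R) : 0 < z1 -> z1 < z2 -> Rbar_lt z2 (CV_radius c) ->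
  elasticity (PSeries c) z1 < elasticity (PSeries c) z2.
Proof.
  intros Hz1 Hz12 Hrad2.
  assert (Hrad1 : Rbar_lt z1 (CV_radius c))
    by (apply Rbar_le_lt_trans with z2; [simpl; lra | exact Hrad2]).
  assert (HF2 : 0 < PSeries c z2) by (apply PSeries_pos; [lra | exact Hrad2]).
  set (m := elasticity (PSeries c) z1).
  assert (Hm : 0 < m).
  { apply Rdiv_lt_0_compat; [apply z_Derive_PSeries_pos | apply PSeries_pos]; assumption. }
  assert (Hgap1 : z1 * Derive (PSeries c) z1 - m * PSeries c z1 = 0).
  { unfold m, elasticity; field; apply Rgt_not_eq, PSeries_pos; assumption. }
  set (r := z2 / z1); assert (Hr : 1 < r).
  { unfold r; apply (Rmult_lt_reg_r z1); [exact Hz1 |].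
    unfold Rdiv; rewrite Rmult_assoc, Rinv_l; lra. }
  set (rho := Rpower r m).
  assert (Hseries : is_series (fun k => c k * z1 ^ k * ((INR k - m) * (Rpower r (INR k) - rho)))
                      (z2 * Derive (PSeries c) z2 - m * PSeries c z2 - rho * 0)).
  { rewrite <- Hgap1.
    eapply is_series_ext; [| exact (is_series_minus _ _ _ _
        (is_series_elasticity_gap c m z2 ltac:(rewrite Rabs_pos_eq by lra; exact Hrad2))
        (is_series_scal_l rho _ _
          (is_series_elasticity_gap c m z1 ltac:(rewrite Rabs_pos_eq by lra; exact Hrad1))))].
    intros k; rewrite Rpower_pow by lra.
    replace z2 with (z1 * r) by (unfold r; field; lra).
    change ((INR k - m) * c k * (z1 * r) ^ k - rho * ((INR k - m) * c k * z1 ^ k)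
            = c k * z1 ^ k * ((INR k - m) * (r ^ k - rho))).
    rewrite Rpow_mult_distr; ring. }
  assert (Hgap2 : 0 < z2 * Derive (PSeries c) z2 - m * PSeries c z2).
  { rewrite Rmult_0_r, Rminus_0_r in Hseries.
    apply (is_series_pos _ _ 0 (fun k => Rmult_le_pos _ _ (PSeries_term_nonneg z1 k ltac:(lra))
                                            (Rpower_sub_mul_sub_nonneg r (INR k) m Hr)));
      [| exact Hseries].
    (* the k = 0 term is m c_0 (r^m - 1) > 0 *)
    simpl; rewrite Rpower_O by lra; fold rho.
    assert (1 < rho) by (unfold rho; rewrite <- (Rpower_O r) by lra; apply Rpower_lt; assumption).
    assert (0 < m * (rho - 1)) by (apply Rmult_lt_0_compat; lra).
    assert (0 < c 0%nat) by apply c_pos.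
    nra. }
  unfold elasticity; apply (Rmult_lt_reg_r (PSeries c z2)); [exact HF2 |].
  unfold Rdiv; rewrite Rmult_assoc, Rinv_l by lra; lra.
Qed.

End PositiveCoefficients.

Lemma elasticity_lommel_t (mu nu x : R) :
  0 < x -> 0 < (mu - nu + 3) / 2 -> 0 < (mu + nu + 3) / 2 ->
  elasticity (lommel_t mu nu) x =
  mu + 1 + elasticity (PSeries (lommel_coef ((mu - nu + 3) / 2) ((mu + nu + 3) / 2)))
                      ((x / 2) ^ 2) * 2.
Proof.
  intros Hx Ha Hb.
  set (c := lommel_coef ((mu - nu + 3) / 2) ((mu + nu + 3) / 2)).
  assert (Hrad : forall z, Rbar_lt (Rabs z) (CV_radius c))
    by (intros z; unfold c; rewrite CV_radius_lommel_coef by assumption; exact I).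
  assert (HF : forall z, 0 < z -> 0 < PSeries c z).
  { intros z Hz; apply PSeries_pos; [intros; apply lommel_coef_pos; assumption | exact Hz |].
    unfold c; rewrite CV_radius_lommel_coef by assumption; exact I. }
  set (h := fun u => Rpower u (mu + 1) * PSeries c (u ^ 2)).
  assert (Hsq : ex_derive (fun u => u ^ 2) (x / 2)) by (auto_derive; exact I).
  assert (HdF : ex_derive (fun u => PSeries c (u ^ 2)) (x / 2))
    by (apply ex_derive_comp; [apply ex_derive_PSeries, Hrad | exact Hsq]).
  assert (Hpow : ex_derive (fun u => Rpower u (mu + 1)) (x / 2)) by (apply ex_derive_Rpower; lra).
  assert (Hx2 : 0 < (x / 2) ^ 2) by (apply pow_lt; lra).
  transitivity (elasticity (fun t => h (t / 2)) x).
  { apply elasticity_ext_loc, (filter_imp (fun t => 0 < t)); [apply lommel_t_PSeries |].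
    exact (open_gt 0 x Hx). }
  rewrite (elasticity_scale h (/ 2)); [| apply ex_derive_mult; assumption | lra | lra |].
  2: { apply Rgt_not_eq, Rmult_lt_0_compat; [apply Rpower_pos | apply HF, Hx2]. }
  unfold h; rewrite elasticity_mult; [| assumption | assumption
                                     | apply Rgt_not_eq, Rpower_pos
                                     | apply Rgt_not_eq, HF, Hx2].
  rewrite elasticity_Rpower by lra.
  rewrite (elasticity_comp (PSeries c) (fun u => u ^ 2));
    [| apply ex_derive_PSeries, Hrad | exact Hsq | lra | apply Rgt_not_eq, HF, Hx2].
  rewrite elasticity_pow by lra; reflexivity.
Qed.

Theorem theorem3p2 (mu nu : R) (hmu : -3 < mu) (hnu : Rabs nu < mu + 3) :
  forall x y : R, 0 < x -> x < y ->
    x * Derive (lommel_t mu nu) x / lommel_t mu nu x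
    < y * Derive (lommel_t mu nu) y / lommel_t mu nu y.
Proof.
  intros x y Hx Hxy.
  apply Rabs_def2 in hnu; destruct hnu as [Hnu_lt Hnu_gt].
  assert (Ha : 0 < (mu - nu + 3) / 2) by lra.
  assert (Hb : 0 < (mu + nu + 3) / 2) by lra.
  change (elasticity (lommel_t mu nu) x < elasticity (lommel_t mu nu) y).
  rewrite !elasticity_lommel_t by lra.
  apply Rplus_lt_compat_l, Rmult_lt_compat_r; [lra |].
  apply elasticity_PSeries_lt; [intros; apply lommel_coef_pos; assumption | apply pow_lt; lra | |].
  - simpl; nra.
  - rewrite CV_radius_lommel_coef by assumption; exact I.
Qed.
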